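(* Let $\alpha \in [0,1)$. For every $k \in \{1,\dots,m-2\}$, with $\mathbf{S}_k = (S_k,\dots,S_k)$, $$S_{\min}\sqrt[n]{1-\alpha} + S_k\left(1 - \sqrt[n]{1-\alpha}\right) \le B_{T_h}^*(\mathbf{S}_k) \le S_{\min}\sqrt[n]{1-\alpha} + S_{k+1}\left(1 - \sqrt[n]{1-\alpha}\right).$$
   Context: Fix integers $m \ge 3$, $n \ge 1$ and reals $S_{\min} < S_{\max}$; $S = \{S_0,\dots,S_{m-1}\}$ with $S_k = S_{\min} + k\frac{S_{\max}-S_{\min}}{m-1}$. $\mathcal{F}$ is the set of probability distributions on $S$, identified with the probability simplex in $\mathbb{R}^m$ with the Euclidean topology; $E[F]$ is the mean. $\Omega$ is the set of samples of size $n$ from $S$, identified with their sorted versions $x_{(1)} \le \dots \le x_{(n)}$. $P_F[\Omega']$ is the probability that the sorted sample of $n$ i.i.d. draws from $F$ lies in $\Omega' \subseteq \Omega$; $\mathcal{G}(\Omega',\alpha) = \{F : P_F[\Omega'] > \alpha\}$ and $\mathcal{F}(\Omega',\alpha)$ is its closure. The high lexicographic order $T_h$: $\mathbf{x} \le_{T_h} \mathbf{y}$ iff $\mathbf{x}=\mathbf{y}$ or at the largest index $j$ with $x_{(j)} \ne y_{(j)}$ we have $x_{(j)} < y_{(j)}$. $\Omega(\mathbf{x},T_h) = \{\mathbf{y} : \mathbf{x} \le_{T_h} \mathbf{y}\}$ and $B_{T_h}^*(\mathbf{x}) = \min\{E[F] : F \in \mathcal{F}(\Omega(\mathbf{x},T_h),\alpha)\}$.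 *)

From HB Require Import structures.
From mathcomp Require Import all_boot all_order all_algebra.
From mathcomp Require Import all_classical all_reals all_analysis.
Set Implicit Arguments. Unset Strict Implicit. Unset Printing Implicit Defensive.
Import Order.TTheory GRing.Theory Num.Theory.
Import numFieldNormedType.Exports.
Local Open Scope classical_set_scope.
Local Open Scope ring_scope.

Section Defs.
Variable R : realType.
Variables (m n : nat) (Smin Smax : R).

Definition Sval (k : nat) : R :=
  Smin + k%:R * ((Smax - Smin) / (m - 1)%:R).

(* distributions on S, identified with the probability simplex in R^m *)
Definition simplex : set 'rV[R]_m :=
  [set F | (forall i, 0 <= F 0 i) /\ \sum_(i < m) F 0 i = 1].

Definition mean (F : 'rV[R]_m) : R := \sum_(i < m) F 0 i * Sval i.

Definition sorted_sample (d : {ffun 'I_n -> 'I_m}) : seq R :=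
  sort <=%R [seq Sval (d j) | j <- enum 'I_n].

(* P_F[Om] : probability that the sorted sample of n i.i.d. draws from F
   lies in Om *)
Definition Prob (F : 'rV[R]_m) (Om : set (seq R)) : R :=
  \sum_(d : {ffun 'I_n -> 'I_m} | `[< Om (sorted_sample d) >])
     \prod_(j < n) F 0 (d j).

Definition leTh (x y : seq R) : Prop :=
  x = y \/
  exists j, (j < n)%N /\ nth 0 x j < nth 0 y j /\
    (forall j', (j < j')%N -> (j' < n)%N -> nth 0 x j' = nth 0 y j').

Definition OmegaTh (x : seq R) : set (seq R) := [set y | leTh x y].

Definition Gset (Om : set (seq R)) (alpha : R) : set 'rV[R]_m :=
  [set F | simplex F /\ alpha < Prob F Om].
Definition Fset (Om : set (seq R)) (alpha : R) : set 'rV[R]_m :=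
  closure (Gset Om alpha).

Definition is_min_mean (Om : set (seq R)) (alpha b : R) : Prop :=
  (exists F, Fset Om alpha F /\ mean F = b) /\
  (forall F, Fset Om alpha F -> b <= mean F).

End Defs.

From HB Require Import structures.
From mathcomp Require Import all_boot all_order all_algebra.
From mathcomp Require Import all_classical all_reals all_analysis.
From mathcomp Require Import lra zify.
Import Order.TTheory GRing.Theory Num.Theory.
Import numFieldNormedType.Exports.
Set Implicit Arguments. Unset Strict Implicit. Unset Printing Implicit Defensive.
Local Open Scope classical_set_scope.
Local Open Scope ring_scope.

(* Let A be the n-th root of 1 - alpha.  A sorted sample whose values all lie
   below S_k is T_h-smaller than (S_k,...,S_k), while one containing a value
   above S_k is T_h-larger, since T_h compares the largest entries first.  So
   if F puts mass q below S_k, then P_F[Omega] <= 1 - q^n; for F in G this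
   forces q < A, whence E[F] >= S_min q + S_k (1 - q) >= S_min A + S_k (1 - A),
   a closed condition that passes to the closure.  Conversely the law with
   mass u at S_0 and 1 - u at S_(k+1) satisfies P_F[Omega] >= 1 - u^n, so it
   lies in G for every u < A; letting u tend to A gives the upper bound.  The
   minimum exists because the closure of G is a compact subset of the simplex
   and the mean is continuous. *)

Lemma sum_ffun_prod_all (R : comPzSemiRingType) (I J : finType) (f : J -> R)
    (P : pred J) :
  \sum_(d : {ffun I -> J} | [forall i, P (d i)]) \prod_i f (d i)
  = (\sum_(j | P j) f j) ^+ #|I|.
Proof.
rewrite -prodr_const; under [RHS]eq_bigr do rewrite big_mkcond.
rewrite bigA_distr_bigA big_mkcond /=; apply: eq_bigr => d _.
case: (boolP [forall i, P (d i)]) => [/forallP Pd | /forallPn[i nPi]].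
  by apply: eq_bigr => i _; rewrite Pd.
by rewrite (bigD1 i) //= (negbTE nPi) mul0r.
Qed.

Lemma continuous_sum (R : numFieldType) (T : topologicalType) (I : Type)
    (r : seq I) (f : I -> T -> R) :
  (forall i, continuous (f i)) -> continuous (fun x => \sum_(i <- r) f i x).
Proof.
move=> fC; elim: r => [|i r IHr] x.
  by under eq_fun do rewrite big_nil; exact: cst_continuous.
under eq_fun do rewrite big_cons; exact: continuousD (fC i x) (IHr x).
Qed.

Lemma ler_psum_subset (R : numDomainType) (I : finType) (P Q : pred I)
    (F : I -> R) :
  (forall i, P i -> Q i) -> (forall i, Q i -> 0 <= F i) ->
  \sum_(i | P i) F i <= \sum_(i | Q i) F i.
Proof.
move=> PQ F_ge0; rewrite [leLHS]big_mkcond [leRHS]big_mkcond; apply: ler_sum => i _.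
by case: ifP => [/PQ -> // | _]; case: ifP => // /F_ge0.
Qed.

Lemma ler_add_scaled_gt0 (R : realFieldType) (b c D A : R) : 0 < A -> 0 < D ->
  (forall t, 0 < t <= A -> b <= c + t * D) -> b <= c.
Proof.
move=> A_gt0 D_gt0 b_le; apply/ler_addgt0Pr => e e_gt0.
have t_gt0 : 0 < Num.min A (e / D) by rewrite lt_min A_gt0 divr_gt0.
apply: le_trans (b_le (Num.min A (e / D)) _) _; first by rewrite t_gt0 ge_min lexx.
by rewrite lerD2l -ler_pdivlMr // ge_min lexx orbT.
Qed.

Section HighLexicographicOrder.
Variables (R : realType) (n : nat).
Hypothesis n_gt0 : (0 < n)%N.

Lemma nseq_leTh_lt (c : R) (y : seq R) :
  size y = n -> (forall x, x \in y -> x < c) -> ~ leTh n (nseq n c) y.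
Proof.
move=> sz_y y_lt [eq_cy | [j [jn [lt_cy _]]]].
  by have := y_lt c; rewrite -eq_cy mem_nseq n_gt0 eqxx ltxx => /(_ isT).
have := y_lt (nth 0 y j); rewrite mem_nth ?sz_y // => /(_ isT).
by move: lt_cy; rewrite nth_nseq jn => /lt_trans/[apply]; rewrite ltxx.
Qed.

Lemma nseq_leTh_gt (c : R) (y : seq R) :
  sorted <=%R y -> size y = n -> (exists2 x, x \in y & c < x) ->
  leTh n (nseq n c) y.
Proof.
move=> y_sorted sz_y [x y_x lt_cx]; right; exists n.-1.
have lt_last : (n.-1 < n)%N by rewrite prednK.
split=> //; split=> [|j lt_j lt_jn]; last by lia.
rewrite nth_nseq lt_last (lt_le_trans lt_cx) // -(nth_index 0 y_x).
apply: (sorted_leq_nth le_trans lexx 0 y_sorted); rewrite ?inE ?sz_y //.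
  by rewrite -sz_y index_mem.
by rewrite -ltnS prednK // -sz_y index_mem.
Qed.

End HighLexicographicOrder.

Section SortedSamples.
Variables (R : realType) (m n : nat) (Smin Smax : R).
Hypotheses (m_gt1 : (1 < m)%N) (n_gt0 : (0 < n)%N) (lt_Smin_Smax : Smin < Smax).

Local Notation S := (Sval m Smin Smax).
Local Notation sample := (@sorted_sample R m n Smin Smax).
Local Notation Omega k := (OmegaTh n (nseq n (S k))).

Lemma ltr_Sval i j : (S i < S j) = (i < j)%N.
Proof.
have step_gt0 : 0 < (Smax - Smin) / (m - 1)%:R.
  by rewrite divr_gt0 ?subr_gt0 // ltr0n subn_gt0.
by rewrite /Sval ltrD2l ltr_pM2r // ltr_nat.
Qed.

Lemma ler_Sval i j : (S i <= S j) = (i <= j)%N.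
Proof. by rewrite leNgt ltr_Sval -leqNgt. Qed.

Lemma Sval0 : S 0 = Smin.
Proof. by rewrite /Sval mul0r addr0. Qed.

Lemma Smin_le_Sval i : Smin <= S i.
Proof. by rewrite -{1}Sval0 ler_Sval. Qed.

Lemma Smin_lt_Sval i : (0 < i)%N -> Smin < S i.
Proof. by rewrite -{1}Sval0 ltr_Sval. Qed.

Lemma size_sorted_sample (d : {ffun 'I_n -> 'I_m}) : size (sample d) = n.
Proof. by rewrite size_sort size_map size_enum_ord. Qed.

Lemma sorted_sampleP (d : {ffun 'I_n -> 'I_m}) x :
  reflect (exists j, x = S (d j)) (x \in sample d).
Proof.
rewrite mem_sort; apply: (iffP mapP) => [[j _ ->] | [j ->]]; first by exists j.
by exists j; rewrite ?mem_enum.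
Qed.

Lemma sorted_sample_notin_Omega k (d : {ffun 'I_n -> 'I_m}) :
  [forall j, d j < k]%N -> ~ Omega k (sample d).
Proof.
move=> /forallP d_lt; apply: nseq_leTh_lt n_gt0 _ _ (size_sorted_sample d) _.
by move=> x /sorted_sampleP[j ->]; rewrite ltr_Sval.
Qed.

Lemma sorted_sample_in_Omega k (d : {ffun 'I_n -> 'I_m}) :
  ~~ [forall j, d j <= k]%N -> Omega k (sample d).
Proof.
move=> /forallPn[j]; rewrite -ltnNge => lt_kd.
apply: nseq_leTh_gt n_gt0 _ _ _ (size_sorted_sample d) _.
  exact/sort_sorted/le_total.
by exists (S (d j)); [apply/sorted_sampleP; exists j | rewrite ltr_Sval].
Qed.

End SortedSamples.

Section SampleProbability.
Variables (R : realType) (m n : nat) (Smin Smax : R).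

Local Notation sample := (@sorted_sample R m n Smin Smax).

Definition mass (F : 'rV[R]_m) (P : pred 'I_m) : R := \sum_(i | P i) F 0 i.

Lemma prod_simplex_ge0 (F : 'rV[R]_m) (d : {ffun 'I_n -> 'I_m}) :
  simplex F -> 0 <= \prod_j F 0 (d j).
Proof. by case=> F_ge0 _; apply: prodr_ge0. Qed.

Lemma sum_prod_not_all (F : 'rV[R]_m) (Q : pred 'I_m) : simplex F ->
  \sum_(d : {ffun 'I_n -> 'I_m} | ~~ [forall j, Q (d j)]) \prod_j F 0 (d j)
  = 1 - mass F Q ^+ n.
Proof.
case=> _ F_sum1.
have total : \sum_(d : {ffun 'I_n -> 'I_m}) \prod_j F 0 (d j) = 1.
  transitivity ((\sum_i F 0 i) ^+ #|'I_n|); last by rewrite F_sum1 expr1n.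
  by rewrite -sum_ffun_prod_all; apply: eq_bigl => d; apply/esym/forallP.
rewrite -[in RHS]total.
rewrite [in RHS](bigID (fun d : {ffun 'I_n -> 'I_m} => [forall j, Q (d j)])) /=.
by rewrite sum_ffun_prod_all card_ord addrC addrK.
Qed.

Lemma Prob_le_mass (F : 'rV[R]_m) (Om : set (seq R)) (Q : pred 'I_m) :
  simplex F -> (forall d : {ffun 'I_n -> 'I_m}, Om (sample d) -> ~~ [forall j, Q (d j)]) ->
  Prob n Smin Smax F Om <= 1 - mass F Q ^+ n.
Proof.
move=> F_simplex Om_Q; rewrite -sum_prod_not_all //.
apply: ler_psum_subset => [d /asboolP/Om_Q // | d _].
exact: prod_simplex_ge0.
Qed.

Lemma Prob_ge_mass (F : 'rV[R]_m) (Om : set (seq R)) (Q : pred 'I_m) :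
  simplex F -> (forall d : {ffun 'I_n -> 'I_m}, ~~ [forall j, Q (d j)] -> Om (sample d)) ->
  1 - mass F Q ^+ n <= Prob n Smin Smax F Om.
Proof.
move=> F_simplex Q_Om; rewrite -sum_prod_not_all //.
apply: ler_psum_subset => [d /Q_Om/asboolP // | d _].
exact: prod_simplex_ge0.
Qed.

End SampleProbability.

Section MinimalMean.
Variables (R : realType) (m n : nat) (Smin Smax : R).
Variables (Om : set (seq R)) (alpha : R).

Local Notation mean := (@mean R m Smin Smax).
Local Notation G := (@Gset R m n Smin Smax Om alpha).
Local Notation K := (@Fset R m n Smin Smax Om alpha).

Lemma mean_continuous : continuous mean.
Proof.
apply: continuous_sum => i F.
exact: cvgM (@coord_continuous R 1 m 0 i F) (@cst_continuous _ _ (Sval m Smin Smax i) F).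
Qed.

Lemma simplex_norm_le1 (F : 'rV[R]_m) : simplex F -> `|F| <= 1.
Proof.
case=> F_ge0 F_sum1; rewrite [leLHS]/Num.norm /= mx_normrE.
apply: bigmax_le => // -[i j] _ /=.
rewrite (ord1 i) ger0_norm // -F_sum1 (bigD1 j) //= lerDl.
exact: sumr_ge0.
Qed.

Lemma Fset_compact : compact K.
Proof.
apply: bounded_closed_compact; last exact: closed_closure.
exists 1; split; first exact: num_real.
move=> r lt_1r F KF; apply: le_trans (ltW lt_1r).
suff : K `<=` [set F | `|F| <= 1] by apply.
rewrite /Fset closureE; apply: smallest_sub => [|F' [] /simplex_norm_le1 //].
apply: (@preimage_closed _ _ _ [set r : R | r <= 1]); last exact: closed_le.
by move=> F0 _; apply: norm_continuous.
Qed.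

Lemma Fset_mean_ge (b : R) :
  (forall F, G F -> b <= mean F) -> forall F, K F -> b <= mean F.
Proof.
move=> G_ge F; suff : K `<=` [set F | b <= mean F] by apply.
rewrite /Fset closureE; apply: smallest_sub => //.
apply: (@preimage_closed _ _ _ [set r : R | b <= r]); last exact: closed_ge.
by move=> F0 _; apply: mean_continuous.
Qed.

Lemma is_min_mean_exists : G !=set0 -> exists b, is_min_mean m n Smin Smax Om alpha b.
Proof.
move=> [F GF]; have K_neq0 : K !=set0 by exists F; exact: subset_closure.
have [F0 /set_mem KF0 F0_min] :=
  EVT_min_rV K_neq0 Fset_compact (continuous_subspaceT mean_continuous).
exists (mean F0); split; first by exists F0.
by move=> F' KF'; apply/F0_min/mem_set.
Qed.

End MinimalMean.

Section MeanBounds.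
Variables (R : realType) (m n : nat) (Smin Smax alpha : R) (k : nat).
Hypotheses (n_gt0 : (0 < n)%N) (lt_Smin_Smax : Smin < Smax).
Hypotheses (alpha_ge0 : 0 <= alpha) (alpha_lt1 : alpha < 1).
Hypothesis lt_k1m : (k.+1 < m)%N.

Local Notation S := (Sval m Smin Smax).
Local Notation mean := (@mean R m Smin Smax).
Local Notation Om := (OmegaTh n (nseq n (S k))).
Local Notation G := (@Gset R m n Smin Smax Om alpha).
Local Notation A := ((1 - alpha) `^ n%:R^-1).

Let m_gt1 : (1 < m)%N. Proof. by apply: leq_trans lt_k1m. Qed.

Lemma root_gt0 : 0 < A.
Proof. by rewrite powR_gt0 // subr_gt0. Qed.

Lemma root_expn : A ^+ n = 1 - alpha.
Proof.
rewrite -powR_mulrn ?powR_ge0 // -powRrM mulVf ?pnatr_eq0 -?lt0n //.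
by rewrite powRr1 // subr_ge0 ltW.
Qed.

Lemma ltr_expn_root u : 0 <= u -> (u ^+ n < 1 - alpha) = (u < A).
Proof.
by move=> u_ge0; rewrite -{1}root_expn ltr_pXn2r // nnegrE powR_ge0.
Qed.

Lemma root_le1 : A <= 1.
Proof. by rewrite leNgt -ltr_expn_root // expr1n -leNgt gerBl. Qed.

Local Notation below := (fun i : 'I_m => i < k)%N.

Lemma mean_ge_mass_below (F : 'rV[R]_m) : simplex F ->
  Smin * mass F below + S k * (1 - mass F below) <= mean F.
Proof.
case=> F_ge0 F_sum1; set q := mass F below.
have -> : 1 - q = mass F (fun i => ~~ (i < k))%N.
  by rewrite -F_sum1 (bigID (fun i : 'I_m => i < k)%N) /= addrC addrK.
rewrite /mean (bigID (fun i : 'I_m => i < k)%N) /= /q /mass !mulr_sumr.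
apply: lerD; apply: ler_sum => i lt_ik; rewrite mulrC ler_wpM2l //.
  exact: Smin_le_Sval.
by rewrite ler_Sval // leqNgt.
Qed.

Lemma Gset_mean_ge (F : 'rV[R]_m) : G F -> Smin * A + S k * (1 - A) <= mean F.
Proof.
case=> F_simplex lt_alpha_Prob; set q := mass F below.
have q_ge0 : 0 <= q by apply: sumr_ge0 => i _; case: F_simplex.
have Prob_le : Prob n Smin Smax F Om <= 1 - q ^+ n.
  apply: Prob_le_mass => // d; apply: contraPN.
  exact: sorted_sample_notin_Omega.
have lt_qA : q < A by rewrite -ltr_expn_root //; lra.
have := mean_ge_mass_below F_simplex; rewrite -/q.
have := Smin_le_Sval m_gt1 lt_Smin_Smax k; nra.
Qed.

Definition two_point (u : R) : 'rV[R]_m :=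
  \row_(i < m) if i == 0 :> nat then u else if i == k.+1 :> nat then 1 - u else 0.

Lemma sum_two_point (u : R) (c : nat -> R) :
  \sum_(i < m) two_point u 0 i * c i = u * c 0%N + (1 - u) * c k.+1.
Proof.
transitivity (\sum_(i < m) ((if i == 0 :> nat then u * c 0%N else 0)
                         + (if i == k.+1 :> nat then (1 - u) * c k.+1 else 0))).
  apply: eq_bigr => i _; rewrite mxE.
  have [-> | _] := eqVneq (i : nat) 0%N; first by rewrite addr0.
  by have [-> | _] := eqVneq (i : nat) k.+1; rewrite ?add0r ?mul0r ?addr0.
rewrite big_split -!big_mkcond !(big_ord1_eq _ (fun=> _)).
by rewrite lt_k1m (ltn_trans _ lt_k1m).
Qed.

Lemma two_point_simplex u : 0 <= u <= 1 -> simplex (two_point u).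
Proof.
case/andP=> u_ge0 u_le1; split.
  by move=> i; rewrite mxE; case: ifP => // _; case: ifP; rewrite ?subr_ge0.
under eq_bigr do rewrite -[two_point _ _ _]mulr1.
by rewrite (sum_two_point u (fun=> 1)) !mulr1 addrC subrK.
Qed.

Lemma mean_two_point u : mean (two_point u) = u * Smin + (1 - u) * S k.+1.
Proof. by rewrite /mean sum_two_point Sval0. Qed.

Lemma mass_two_point u : mass (two_point u) (fun i => i <= k)%N = u.
Proof.
rewrite /mass big_mkcond.
transitivity (\sum_(i < m) two_point u 0 i * (i <= k)%N%:R).
  by apply: eq_bigr => i _; case: leqP; rewrite ?mulr1 ?mulr0.
by rewrite (sum_two_point u (fun i => (i <= k)%N%:R)) ltnn mulr1 mulr0 addr0.
Qed.

Lemma two_point_Gset u : 0 <= u < A -> G (two_point u).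
Proof.
case/andP=> u_ge0 lt_uA.
have u_simplex : simplex (two_point u).
  by apply: two_point_simplex; rewrite u_ge0 (le_trans (ltW lt_uA) root_le1).
split=> //; apply: lt_le_trans (Prob_ge_mass (Q := fun i => i <= k)%N u_simplex _).
  by rewrite mass_two_point; move: lt_uA; rewrite -ltr_expn_root //; lra.
by move=> d; apply: sorted_sample_in_Omega.
Qed.

Lemma min_mean_ge b :
  is_min_mean m n Smin Smax Om alpha b -> Smin * A + S k * (1 - A) <= b.
Proof. by case=> -[F [KF <-]] _; apply: Fset_mean_ge KF; apply: Gset_mean_ge. Qed.

Lemma min_mean_le b :
  is_min_mean m n Smin Smax Om alpha b -> b <= Smin * A + S k.+1 * (1 - A).
Proof.
case=> _ b_min; apply: (@ler_add_scaled_gt0 _ _ _ (S k.+1 - Smin) A).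
- exact: root_gt0.
- by rewrite subr_gt0 Smin_lt_Sval.
move=> t /andP[t_gt0 le_tA].
have /subset_closure/b_min : G (two_point (A - t)) by apply: two_point_Gset; lra.
rewrite mean_two_point; lra.
Qed.

End MeanBounds.

Theorem lemma8 (R : realType) (m n : nat) (Smin Smax alpha : R) (k : nat) :
  (3 <= m)%N -> (1 <= n)%N -> Smin < Smax ->
  0 <= alpha -> alpha < 1 ->
  (1 <= k)%N -> (k <= m - 2)%N ->
  exists b : R,
    is_min_mean m n Smin Smax (OmegaTh n (nseq n (Sval m Smin Smax k))) alpha b /\
    Smin * ((1 - alpha) `^ (n%:R^-1)) + Sval m Smin Smax k * (1 - (1 - alpha) `^ (n%:R^-1)) <= b /\
    b <= Smin * ((1 - alpha) `^ (n%:R^-1)) + Sval m Smin Smax k.+1 * (1 - (1 - alpha) `^ (n%:R^-1)).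
Proof.
move=> m_ge3 n_gt0 lt_Smin_Smax alpha_ge0 alpha_lt1 _ le_k_m2.
have lt_k1m : (k.+1 < m)%N by lia.
have [b b_min] : exists b, is_min_mean m n Smin Smax (OmegaTh n (nseq n (Sval m Smin Smax k))) alpha b.
  apply: is_min_mean_exists; exists (two_point m k 0).
  by apply: two_point_Gset; rewrite // lexx root_gt0.
by exists b; split; [| split]; [| exact: min_mean_ge b_min | exact: min_mean_le b_min].
Qed.
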